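(* For every countable group $G$ there is a proper left-invariant metric $d_G$ on $G$ such that $\operatorname{asdim}_{AN}(G,d_G)=\operatorname{asdim}(G)$.
   Context: For a countable group $G$, $\operatorname{asdim}(G)$ denotes $\operatorname{asdim}(G,d)$ for any proper left-invariant metric $d$ (it does not depend on the choice). A metric on $G$ is proper if bounded sets are finite, left-invariant if $d(gx,gy)=d(x,y)$. For a metric space $X$: $\operatorname{asdim}(X)\le n$ iff for every $r>0$ there are $D<\infty$ and families $\mathcal U_1,\dots,\mathcal U_{n+1}$ of subsets covering $X$, each $r$-disjoint (points in different members of the same family at distance $\ge r$), with members of diameter $\le D$; $\operatorname{asdim}_{AN}(X)\le n$ iff there are $b,c\ge0$ such that this holds with $D=cr+b$ for all $r>0$. *)

From Stdlib Require Import Reals.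
Open Scope R_scope.

Record is_group (G : Type) (mul : G -> G -> G) (one : G) (inv : G -> G) : Prop := {
  grp_assoc : forall x y z, mul x (mul y z) = mul (mul x y) z;
  grp_onel  : forall x, mul one x = x;
  grp_oner  : forall x, mul x one = x;
  grp_invl  : forall x, mul (inv x) x = one;
  grp_invr  : forall x, mul x (inv x) = one
}.

Definition countable (G : Type) : Prop :=
  exists f : G -> nat, forall x y, f x = f y -> x = y.

Record is_metric (X : Type) (d : X -> X -> R) : Prop := {
  met_nonneg : forall x y, 0 <= d x y;
  met_zero   : forall x y, d x y = 0 <-> x = y;
  met_sym    : forall x y, d x y = d y x;
  met_tri    : forall x y z, d x z <= d x y + d y z
}.

Definition bounded_set {X : Type} (d : X -> X -> R) (A : X -> Prop) : Prop :=
  exists x0 r, forall y, A y -> d x0 y <= r.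

Definition finite_set {X : Type} (A : X -> Prop) : Prop :=
  exists l : list X, forall y, A y -> List.In y l.

Definition proper_metric {X : Type} (d : X -> X -> R) : Prop :=
  forall A : X -> Prop, bounded_set d A -> finite_set A.

Definition left_invariant {G : Type} (mul : G -> G -> G) (d : G -> G -> R) : Prop :=
  forall g x y, d (mul g x) (mul g y) = d x y.

Definition family (X : Type) := (X -> Prop) -> Prop.

Definition r_disjoint {X : Type} (d : X -> X -> R) (r : R) (U : family X) : Prop :=
  forall A B, U A -> U B -> A <> B -> forall x y, A x -> B y -> r <= d x y.

Definition members_diam_le {X : Type} (d : X -> X -> R) (D : R) (U : family X) : Prop :=
  forall A, U A -> forall x y, A x -> A y -> d x y <= D.

Definition good_cover {X : Type} (d : X -> X -> R) (n : nat) (r D : R) : Prop :=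
  exists U : nat -> family X,
    (forall x, exists i, (i < S n)%nat /\ exists A, U i A /\ A x) /\
    (forall i, (i < S n)%nat -> r_disjoint d r (U i)) /\
    (forall i, (i < S n)%nat -> members_diam_le d D (U i)).

Definition asdim_le {X : Type} (d : X -> X -> R) (n : nat) : Prop :=
  forall r, 0 < r -> exists D, good_cover d n r D.

Definition asdimAN_le {X : Type} (d : X -> X -> R) (n : nat) : Prop :=
  exists b c, 0 <= b /\ 0 <= c /\ forall r, 0 < r -> good_cover d n r (c * r + b).

From Stdlib Require Import Reals Lra Lia ZArith Wf_nat List Classical ClassicalEpsilon.
Open Scope R_scope.

(* Weight each element s of G by e s + e (inv s) + 1, with e : G -> nat injective: only
   finitely many elements have bounded weight, so the weighted word length is a proper
   left-invariant nat-valued metric d.  Choose h t >= 2 t + 1 dominating, for every n <= t,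
   the diameter of some d-cover witnessing asdim <= n at scale t, and replace d by the index
   of d x y in the tower 0, 1, h 1, h (h 1), ...  Growth h t >= 2 t + 1 keeps this subadditive,
   so it is still a proper metric, and it does not change asdim.  But at scale r a d-cover at
   scale tower k, with k close to r, has d-diameter at most h (tower k) = tower (k + 1), hence
   rescaled diameter at most k + 1: every asdim bound becomes an Assouad-Nagata bound. *)

Section GroupFacts.

Variables (G : Type) (mul : G -> G -> G) (one : G) (inv : G -> G).
Hypothesis HG : is_group G mul one inv.

Let mulA := grp_assoc _ _ _ _ HG.
Let mul1g := grp_onel _ _ _ _ HG.
Let mulg1 := grp_oner _ _ _ _ HG.
Let mulVg := grp_invl _ _ _ _ HG.
Let mulgV := grp_invr _ _ _ _ HG.

Lemma inv_unique a b : mul a b = one -> b = inv a.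
Proof.
  intro Hab. rewrite <- (mul1g b), <- (mulVg a), <- mulA, Hab, mulg1. reflexivity.
Qed.

Lemma invK x : inv (inv x) = x.
Proof. symmetry. apply inv_unique, mulVg. Qed.

Lemma inv1 : inv one = one.
Proof. symmetry. apply inv_unique, mul1g. Qed.

Lemma invM x y : inv (mul x y) = mul (inv y) (inv x).
Proof.
  symmetry. apply inv_unique.
  rewrite <- mulA, (mulA y), mulgV, mul1g, mulgV. reflexivity.
Qed.

Lemma mulKg x y : mul (inv x) (mul x y) = y.
Proof. rewrite mulA, mulVg, mul1g. reflexivity. Qed.

Lemma mulKVg x y : mul x (mul (inv x) y) = y.
Proof. rewrite mulA, mulgV, mul1g. reflexivity. Qed.

End GroupFacts.

Lemma finite_set_sub {X} (A B : X -> Prop) :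
  finite_set B -> (forall x, A x -> B x) -> finite_set A.
Proof. intros [l Hl] HAB. exists l. auto. Qed.

Lemma finite_set_image2 {X Y Z} (f : X -> Y -> Z) (A : X -> Prop) (B : Y -> Prop) :
  finite_set A -> finite_set B ->
  finite_set (fun z => exists a b, A a /\ B b /\ z = f a b).
Proof.
  intros [la Hla] [lb Hlb].
  exists (map (fun p => f (fst p) (snd p)) (list_prod la lb)).
  intros z (a & b & Ha & Hb & ->).
  apply (in_map (fun p => f (fst p) (snd p)) _ (a, b)), in_prod; auto.
Qed.

Lemma finite_set_le_injective {X} (e : X -> nat) :
  (forall x y, e x = e y -> x = y) -> forall K, finite_set (fun x => (e x <= K)%nat).
Proof.
  intros He K. induction K as [|K [l Hl]].
  - destruct (classic (exists x, e x = 0%nat)) as [[x Hx]|Hno].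
    + exists (x :: nil). intros y Hy. left. apply He. lia.
    + exists nil. intros y Hy. apply Hno. exists y. lia.
  - destruct (classic (exists x, e x = S K)) as [[x Hx]|Hno].
    + exists (x :: l). intros y Hy.
      destruct (Nat.eq_dec (e y) (S K)); [left; apply He; lia | right; apply Hl; lia].
    + exists l. intros y Hy. apply Hl.
      destruct (Nat.eq_dec (e y) (S K)); [exfalso; eauto | lia].
Qed.

Record is_nat_metric {X : Type} (d : X -> X -> nat) : Prop := {
  nmet_zero : forall x y, d x y = 0%nat <-> x = y;
  nmet_sym  : forall x y, d x y = d y x;
  nmet_tri  : forall x y z, (d x z <= d x y + d y z)%nat
}.

Definition finite_balls {X : Type} (d : X -> X -> nat) : Prop :=
  forall x0 K, finite_set (fun y => (d x0 y <= K)%nat).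

Section WordMetric.

Variables (G : Type) (mul : G -> G -> G) (one : G) (inv : G -> G).
Hypothesis HG : is_group G mul one inv.
Variable w : G -> nat.
Hypothesis w_pos : forall s, (1 <= w s)%nat.
Hypothesis w_inv : forall s, w (inv s) = w s.

Local Open Scope nat_scope.

Inductive word_weight_le : nat -> G -> Prop :=
| wwl_one n : word_weight_le n one
| wwl_cons n s g : word_weight_le n g -> word_weight_le (w s + n) (mul s g).

Lemma word_weight_le_mono n m g : word_weight_le n g -> n <= m -> word_weight_le m g.
Proof.
  intros Hg; revert m; induction Hg as [n|n s g _ IH]; intros m Hm.
  - constructor.
  - replace m with (w s + (m - w s)) by lia. constructor. apply IH. lia.
Qed.

Lemma word_weight_le_mul a b g h :
  word_weight_le a g -> word_weight_le b h -> word_weight_le (a + b) (mul g h).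
Proof.
  intros Hg Hh; induction Hg as [a|a s g _ IH].
  - rewrite (grp_onel _ _ _ _ HG). apply word_weight_le_mono with b; auto; lia.
  - rewrite <- (grp_assoc _ _ _ _ HG), <- Nat.add_assoc. constructor. exact IH.
Qed.

Lemma word_weight_le_inv n g : word_weight_le n g -> word_weight_le n (inv g).
Proof.
  induction 1 as [n|n s g _ IH].
  - rewrite (inv1 _ _ _ _ HG). constructor.
  - rewrite (invM _ _ _ _ HG), Nat.add_comm.
    apply word_weight_le_mul; auto.
    rewrite <- (grp_oner _ _ _ _ HG (inv s)).
    replace (w s) with (w (inv s) + 0) by (rewrite w_inv; lia).
    repeat constructor.
Qed.

Lemma word_weight_le0 g : word_weight_le 0 g -> g = one.
Proof. inversion 1; [reflexivity | specialize (w_pos s); lia]. Qed.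

Lemma word_weight_leS_cases n g : word_weight_le (S n) g ->
  g = one \/ exists s h, w s <= S n /\ word_weight_le n h /\ g = mul s h.
Proof.
  inversion 1 as [|m s h Hh Hm]; [left; reflexivity|right].
  exists s, h. repeat split; try lia.
  apply word_weight_le_mono with m; [exact Hh | specialize (w_pos s); lia].
Qed.

Lemma word_weight_le_finite :
  (forall K, finite_set (fun s => w s <= K)) -> forall n, finite_set (word_weight_le n).
Proof.
  intros Hw n. induction n as [|n IH].
  - exists (one :: nil). intros g Hg. left. symmetry. apply word_weight_le0, Hg.
  - destruct (finite_set_image2 mul _ _ (Hw (S n)) IH) as [l Hl].
    exists (one :: l). intros g Hg.
    destruct (word_weight_leS_cases n g Hg) as [->|(s & h & Hs & Hh & ->)];
      [left | right; apply Hl; eauto]; reflexivity.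
Qed.

Lemma word_length_exists g :
  exists n, word_weight_le n g /\ forall m, word_weight_le m g -> n <= m.
Proof.
  destruct (dec_inh_nat_subset_has_unique_least_element (fun n => word_weight_le n g))
    as [n [[Hn Hmin] _]].
  - intro n. apply classic.
  - exists (w g + 0). rewrite <- (grp_oner _ _ _ _ HG g) at 2. repeat constructor.
  - exists n. auto.
Qed.

Definition word_length (g : G) : nat :=
  epsilon (inhabits 0) (fun n => word_weight_le n g /\ forall m, word_weight_le m g -> n <= m).

Lemma word_length_spec g : word_weight_le (word_length g) g.
Proof. exact (proj1 (epsilon_spec _ _ (word_length_exists g))). Qed.

Lemma word_length_min g m : word_weight_le m g -> word_length g <= m.
Proof. exact (proj2 (epsilon_spec _ _ (word_length_exists g)) m). Qed.

Lemma word_length_inv g : word_length (inv g) = word_length g.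
Proof.
  apply Nat.le_antisymm; apply word_length_min.
  - apply word_weight_le_inv, word_length_spec.
  - rewrite <- (invK _ _ _ _ HG g) at 2. apply word_weight_le_inv, word_length_spec.
Qed.

Definition word_dist (x y : G) : nat := word_length (mul (inv x) y).

Lemma word_dist_nat_metric : is_nat_metric word_dist.
Proof.
  unfold word_dist. split.
  - intros x y. split; intro H.
    + assert (Hone : mul (inv x) y = one).
      { apply word_weight_le0. rewrite <- H. apply word_length_spec. }
      apply (inv_unique _ _ _ _ HG) in Hone. rewrite (invK _ _ _ _ HG) in Hone. symmetry. exact Hone.
    + subst. rewrite (grp_invl _ _ _ _ HG).
      apply Nat.le_0_r, word_length_min. constructor.
  - intros x y. rewrite <- word_length_inv, (invM _ _ _ _ HG), (invK _ _ _ _ HG).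
    reflexivity.
  - intros x y z. apply word_length_min.
    replace (mul (inv x) z) with (mul (mul (inv x) y) (mul (inv y) z))
      by (rewrite <- (grp_assoc _ _ _ _ HG), (mulKVg _ _ _ _ HG); reflexivity).
    apply word_weight_le_mul; apply word_length_spec.
Qed.

Lemma word_dist_left_invariant g x y : word_dist (mul g x) (mul g y) = word_dist x y.
Proof.
  unfold word_dist. rewrite (invM _ _ _ _ HG), <- (grp_assoc _ _ _ _ HG), (mulKg _ _ _ _ HG).
  reflexivity.
Qed.

Lemma word_dist_finite_balls :
  (forall K, finite_set (fun s => w s <= K)) -> finite_balls word_dist.
Proof.
  intros Hw x0 K. destruct (word_weight_le_finite Hw K) as [l Hl].
  exists (map (mul x0) l). intros y Hy.
  rewrite <- (mulKVg _ _ _ _ HG x0 y). apply in_map, Hl.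
  apply word_weight_le_mono with (word_dist x0 y); [apply word_length_spec | exact Hy].
Qed.

End WordMetric.

Section Tower.

Local Open Scope nat_scope.

Variable h : nat -> nat.
Hypothesis h_ge : forall t, 2 * t + 1 <= h t.

(* [tower 1 = 1] rather than [h 0], so that [tower_index] vanishes only at [0]. *)
Fixpoint tower (k : nat) : nat :=
  match k with 0 => 0 | 1 => 1 | S k' => h (tower k') end.

Fixpoint tower_index_upto (x b : nat) : nat :=
  match b with
  | 0 => 0
  | S b' => if tower b <=? x then b else tower_index_upto x b'
  end.

Definition tower_index (x : nat) : nat := tower_index_upto x x.

Lemma tower_index_upto_S x b :
  tower_index_upto x (S b) = if tower (S b) <=? x then S b else tower_index_upto x b.
Proof. reflexivity. Qed.

Lemma tower_SS k : 1 <= k -> tower (S k) = h (tower k).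
Proof. destruct k; [lia | reflexivity]. Qed.

Lemma tower_lt_S k : tower k < tower (S k).
Proof.
  destruct k as [|[|k]]; [simpl; lia | specialize (h_ge 1); simpl; lia |].
  rewrite (tower_SS (S (S k))) by lia. specialize (h_ge (tower (S (S k)))). lia.
Qed.

Lemma tower_le_mono i j : i <= j -> tower i <= tower j.
Proof. induction 1 as [|j _ IH]; [lia | pose proof (tower_lt_S j); lia]. Qed.

Lemma tower_ge k : k <= tower k.
Proof. induction k as [|k IH]; [lia | pose proof (tower_lt_S k); lia]. Qed.

Lemma tower_index_upto_spec x b :
  tower_index_upto x b = 0 \/ tower (tower_index_upto x b) <= x.
Proof.
  induction b as [|b IH]; [left; reflexivity | rewrite tower_index_upto_S].
  destruct (tower (S b) <=? x) eqn:E; [right; apply Nat.leb_le, E | exact IH].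
Qed.

Lemma tower_index_upto_max x b j : j <= b -> tower j <= x -> j <= tower_index_upto x b.
Proof.
  induction b as [|b IH]; intros Hjb Hj; [simpl; lia | rewrite tower_index_upto_S].
  destruct (tower (S b) <=? x) eqn:E; [lia |].
  apply Nat.leb_gt in E. apply IH; [destruct (Nat.eq_dec j (S b)); subst; lia | exact Hj].
Qed.

Lemma tower_le_index j x : j <= tower_index x <-> tower j <= x.
Proof.
  split; intro Hj.
  - destruct (tower_index_upto_spec x x) as [E|E]; unfold tower_index in Hj.
    + replace j with 0 by lia. simpl; lia.
    + pose proof (tower_le_mono _ _ Hj). lia.
  - apply tower_index_upto_max; [pose proof (tower_ge j); lia | exact Hj].
Qed.

Lemma tower_index_le j x : tower_index x <= j <-> x < tower (S j).
Proof. pose proof (tower_le_index (S j) x). lia. Qed.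

Lemma tower_index_mono x y : x <= y -> tower_index x <= tower_index y.
Proof.
  intro Hxy. apply tower_le_index.
  pose proof (proj1 (tower_le_index _ x) (le_n _)). lia.
Qed.

Lemma tower_index_eq0 x : tower_index x = 0 <-> x = 0.
Proof. rewrite <- Nat.le_0_r, tower_index_le. simpl. lia. Qed.

(* If [b < tower (S k)] then [a + b <= 2 b < tower (S (S k))], as [h t >= 2 t + 1]. *)
Lemma tower_index_subadditive a b :
  tower_index (a + b) <= tower_index a + tower_index b.
Proof.
  assert (Hord : forall a b, a <= b -> tower_index (a + b) <= tower_index a + tower_index b).
  { clear a b. intros [|a] b Hab; [simpl; lia |].
    assert (Ha : 1 <= tower_index (S a)) by (apply tower_le_index; simpl; lia).
    set (k := tower_index b).
    assert (Hb : b < tower (S k)) by (apply tower_index_le; reflexivity).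
    assert (Hsum : tower_index (S a + b) <= S k).
    { apply tower_index_le. rewrite (tower_SS (S k)) by lia.
      specialize (h_ge (tower (S k))). lia. }
    lia. }
  destruct (Nat.le_ge_cases a b); [auto |].
  rewrite Nat.add_comm, (Nat.add_comm (tower_index a)). auto.
Qed.

End Tower.

Lemma good_cover_transfer {X} (d d' : X -> X -> R) n r r' D D' :
  good_cover d n r D ->
  (forall x y, r <= d x y -> r' <= d' x y) ->
  (forall x y, d x y <= D -> d' x y <= D') ->
  good_cover d' n r' D'.
Proof.
  intros [U [Hcov [Hdisj HU]]] Hsep Hdiam. exists U. split; [exact Hcov | split].
  - intros i Hi A B HA HB HAB x y Hx Hy. apply Hsep, (Hdisj i Hi A B); assumption.
  - intros i Hi A HA x y Hx Hy. apply Hdiam, (HU i Hi A); assumption.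
Qed.

Lemma asdimAN_le_asdim_le {X} (d : X -> X -> R) n : asdimAN_le d n -> asdim_le d n.
Proof. intros (b & c & _ & _ & Hcov) r Hr. exists (c * r + b). auto. Qed.

Lemma nat_ceil_exists r : 0 <= r -> exists k : nat, r <= INR k <= r + 1.
Proof.
  intro Hr. destruct (archimed r) as [Hup Hup1].
  assert (Hpos : (0 < up r)%Z) by (apply lt_0_IZR; lra).
  exists (Z.to_nat (up r)). rewrite INR_IZR_INZ, Z2Nat.id by lia. lra.
Qed.

Definition INR_dist {X : Type} (d : X -> X -> nat) : X -> X -> R := fun x y => INR (d x y).

Section Rescaling.

Variables (X : Type) (d : X -> X -> nat) (f : nat -> nat).
Hypothesis f_mono : forall a b, (a <= b)%nat -> (f a <= f b)%nat.
Hypothesis f_proper : forall K, exists M, forall a, (f a <= K)%nat -> (a <= M)%nat.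

Let rho := INR_dist (fun x y => f (d x y)).

Lemma rescaled_is_metric :
  is_nat_metric d ->
  (forall a b, (f (a + b) <= f a + f b)%nat) -> (forall a, f a = 0%nat <-> a = 0%nat) ->
  is_metric X rho.
Proof.
  intros Hd f_sub f_eq0. unfold rho, INR_dist. split.
  - intros x y. apply pos_INR.
  - intros x y. rewrite <- (nmet_zero d Hd x y), <- f_eq0.
    split; intro H; [apply INR_eq, H | rewrite H; reflexivity].
  - intros x y. rewrite (nmet_sym d Hd). reflexivity.
  - intros x y z. rewrite <- plus_INR. apply le_INR.
    eapply Nat.le_trans; [apply f_mono, (nmet_tri d Hd x y z) | apply f_sub].
Qed.

Lemma rescaled_proper : finite_balls d -> proper_metric rho.
Proof.
  intros Hballs A (x0 & r & Hr).
  destruct (INR_unbounded r) as [K HK]. destruct (f_proper K) as [M HM].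
  apply finite_set_sub with (fun y => (d x0 y <= M)%nat); [apply Hballs |].
  intros y Hy. apply HM, INR_le. specialize (Hr y Hy). unfold rho, INR_dist in Hr. lra.
Qed.

Lemma rescaled_asdim_covers n :
  asdim_le rho n -> forall t : nat, exists D : nat, good_cover (INR_dist d) n (INR t) (INR D).
Proof.
  intros Hasdim t. destruct (Hasdim (INR (f t) + 1)) as [D' Hcov].
  { pose proof (pos_INR (f t)). lra. }
  destruct (INR_unbounded D') as [K HK]. destruct (f_proper K) as [M HM].
  exists M. apply (good_cover_transfer _ _ _ _ _ _ _ Hcov); unfold rho, INR_dist; intros x y Hxy.
  - apply le_INR. destruct (Nat.le_gt_cases t (d x y)) as [|Hlt]; [assumption |].
    apply Nat.lt_le_incl, f_mono, le_INR in Hlt. lra.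
  - apply le_INR, HM, INR_le. lra.
Qed.

End Rescaling.

Lemma tower_index_asdimAN {X} (d : X -> X -> nat) (h : nat -> nat) n :
  (forall t, (2 * t + 1 <= h t)%nat) ->
  (forall t, (n <= t)%nat -> good_cover (INR_dist d) n (INR t) (INR (h t))) ->
  asdimAN_le (INR_dist (fun x y => tower_index h (d x y))) n.
Proof.
  intros h_ge Hcov. exists (INR n + 3), 1. split; [pose proof (pos_INR n); lra | split; [lra |]].
  intros r Hr. destruct (nat_ceil_exists r) as [k0 Hk0]; [lra |].
  set (k := Nat.max (Nat.max k0 1) n).
  assert (Hk : INR k0 <= INR k /\ INR (S k) <= INR k0 + 2 + INR n).
  { split; [apply le_INR; unfold k; lia |].
    replace (INR k0 + 2 + INR n) with (INR (k0 + 2 + n)) by (rewrite !plus_INR; simpl; lra).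
    apply le_INR. unfold k. lia. }
  assert (Hnk : (n <= tower h k)%nat) by (pose proof (tower_ge h h_ge k); unfold k in *; lia).
  apply (good_cover_transfer _ _ _ _ _ _ _ (Hcov _ Hnk)); unfold INR_dist; intros x y Hxy;
    apply INR_le in Hxy.
  - apply (tower_le_index h h_ge), le_INR in Hxy. lra.
  - assert (Hidx : (tower_index h (d x y) <= S k)%nat).
    { apply (tower_index_le h h_ge). rewrite <- (tower_SS h k) in Hxy by (unfold k; lia).
      pose proof (tower_lt_S h h_ge (S k)). lia. }
    apply le_INR in Hidx. lra.
Qed.

Section Control.

Context {X : Type} (d : X -> X -> nat).

Definition cover_diam (n t : nat) : nat :=
  epsilon (inhabits 0%nat) (fun D : nat => good_cover (INR_dist d) n (INR t) (INR D)).

Lemma cover_diam_spec n t :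
  (exists D : nat, good_cover (INR_dist d) n (INR t) (INR D)) ->
  good_cover (INR_dist d) n (INR t) (INR (cover_diam n t)).
Proof. exact (epsilon_spec (inhabits 0%nat) _). Qed.

(* Diagonal bound: dominating [cover_diam n t] for all [n <= t] lets one rescaling serve every dimension. *)
Definition control (t : nat) : nat :=
  (2 * t + 1 + list_max (map (fun j => cover_diam j t) (seq 0 (S t))))%nat.

Lemma control_ge t : (2 * t + 1 <= control t)%nat.
Proof. unfold control. lia. Qed.

Lemma control_good_cover n :
  (forall t : nat, exists D : nat, good_cover (INR_dist d) n (INR t) (INR D)) ->
  forall t, (n <= t)%nat -> good_cover (INR_dist d) n (INR t) (INR (control t)).
Proof.
  intros Hcov t Hnt.
  apply (good_cover_transfer _ _ _ _ _ _ _ (cover_diam_spec n t (Hcov t)));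
    [intros; assumption | intros x y Hxy].
  apply Rle_trans with (1 := Hxy), le_INR.
  assert (Hin : In (cover_diam n t) (map (fun j => cover_diam j t) (seq 0 (S t)))).
  { apply (in_map (fun j => cover_diam j t)), in_seq. lia. }
  pose proof (proj1 (Forall_forall _ _) (proj1 (list_max_le _ _) (le_n _)) _ Hin) as Hle.
  cbv beta in Hle. unfold control. lia.
Qed.

End Control.

Theorem exists_rescaling_asdimAN_iff_asdim {X} (d : X -> X -> nat) :
  is_nat_metric d -> finite_balls d ->
  exists f : nat -> nat,
    let rho := INR_dist (fun x y => f (d x y)) in
    is_metric X rho /\ proper_metric rho /\ forall n, asdimAN_le rho n <-> asdim_le rho n.
Proof.
  intros Hd Hballs. set (h := control d).
  assert (h_ge : forall t, (2 * t + 1 <= h t)%nat) by apply control_ge.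
  assert (f_proper : forall K, exists M, forall a, (tower_index h a <= K)%nat -> (a <= M)%nat).
  { intro K. exists (tower h (S K)). intros a Ha.
    apply (tower_index_le h h_ge) in Ha. lia. }
  exists (tower_index h). intro rho. split; [| split].
  - apply rescaled_is_metric; auto using tower_index_mono, tower_index_subadditive, tower_index_eq0.
  - apply rescaled_proper; auto using tower_index_mono.
  - intro n. split; [apply asdimAN_le_asdim_le | intro Hasdim]. apply tower_index_asdimAN; [exact h_ge |].
    apply control_good_cover, (rescaled_asdim_covers _ _ _ (tower_index_mono h h_ge) f_proper n Hasdim).
Qed.

Theorem mainTheorem18 (G : Type) (mul : G -> G -> G) (one : G) (inv : G -> G)
  (HG : is_group G mul one inv) (Hc : countable G) :
  exists dG : G -> G -> R,
    is_metric G dG /\ proper_metric dG /\ left_invariant mul dG /\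
    (forall n : nat, asdimAN_le dG n <-> asdim_le dG n).
Proof.
  destruct Hc as [e e_inj].
  set (w := fun s => (e s + e (inv s) + 1)%nat).
  assert (w_pos : forall s, (1 <= w s)%nat) by (intro; unfold w; lia).
  assert (w_inv : forall s, w (inv s) = w s).
  { intro s. unfold w. rewrite (invK _ _ _ _ HG). lia. }
  assert (w_finite : forall K, finite_set (fun s => (w s <= K)%nat)).
  { intro K. apply finite_set_sub with (fun s => (e s <= K)%nat).
    - apply finite_set_le_injective, e_inj.
    - intro s. unfold w. lia. }
  set (d := word_dist G mul one inv w).
  destruct (exists_rescaling_asdimAN_iff_asdim d) as (f & Hmetric & Hproper & Hasdim).
  - apply word_dist_nat_metric; assumption.
  - apply word_dist_finite_balls; assumption.
  - exists (INR_dist (fun x y => f (d x y))). split; [| split; [| split]]; try assumption.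
    intros g x y. unfold INR_dist, d. rewrite word_dist_left_invariant by assumption. reflexivity.
Qed.
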